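(* Let $k$ be a field, $n\ge 1$, and let $Q_H$ be the quiver with vertices $x_1,\ldots,x_{n+1},y_1,\ldots,y_n$ and arrows $r_i:x_i\to y_i$, $l_i:y_i\to x_{i+1}$, $a_i:x_i\to x_{i+1}$ for $i=1,\ldots,n$. Put $m_{0i}=a_1\cdots a_{i-1}$ (the stationary path at $x_1$ if $i=1$), $A_i=r_il_i$, $T_i=A_ia_i^{-1}$ and $\alpha_i=m_{0i}T_im_{0i}^{-1}$, a closed walk at $x_1$. Let $i\ge1$, $k'\ge0$ with $i+k'\le n$, and let $I$ be an admissible ideal of $kQ_H$ in which $a_ia_{i+1}\cdots a_{i+k'}+A_iA_{i+1}\cdots A_{i+k'}$ is a minimal relation. Then $\tilde\alpha_i\tilde\alpha_{i+1}\cdots\tilde\alpha_{i+k'}=1$ in $\pi_1(Q_H,I,x_1)$.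
   Context: An ideal $I$ of $kQ$ is admissible if $F^m\subseteq I\subseteq F^2$ for some $m\ge2$, $F$ the arrow ideal. For vertices $x,y$, $I(x,y)=e_x(kQ)e_y\cap I$; a relation $\sum_{j=1}^{r}\lambda_j w_j\in I(x,y)$ ($\lambda_j\in k^*$, $w_j$ distinct paths $x\to y$) is minimal if $r\ge2$ and no proper nonempty subsum lies in $I(x,y)$. Walks are composable sequences of arrows and formal inverses $\alpha^{-1}$. Homotopy $\sim$ is the smallest equivalence relation on walks with $\alpha\alpha^{-1}\sim e_{s(\alpha)}$, $\alpha^{-1}\alpha\sim e_{t(\alpha)}$, $w_j\sim w_l$ for paths occurring in a common minimal relation of $I$, and $u\sim v\Rightarrow wuw'\sim wvw'$. $\pi_1(Q,I,x_1)$ is the group of homotopy classes $\tilde w$ of closed walks at $x_1$. *)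

From HB Require Import structures.
From mathcomp Require Import all_boot all_order all_algebra.
Set Implicit Arguments.
Unset Strict Implicit.
Unset Printing Implicit Defensive.
Import GRing.Theory.
Local Open Scope ring_scope.

Record quiver := Quiver {
  qV : finType;
  qA : finType;
  qs : qA -> qV;
  qt : qA -> qV
}.

(* A (candidate) path: start vertex and the list of arrows, composed left to
   right (a path a1 a2 ... goes first along a1).  [::] is the stationary path. *)
Definition qpath (Q : quiver) := (qV Q * seq (qA Q))%type.

Fixpoint valid_from (Q : quiver) (v : qV Q) (s : seq (qA Q)) : bool :=
  if s is a :: s' then (qs a == v) && valid_from (qt a) s' else true.

Fixpoint end_from (Q : quiver) (v : qV Q) (s : seq (qA Q)) : qV Q :=
  if s is a :: s' then end_from (qt a) s' else v.

Definition pvalid (Q : quiver) (p : qpath Q) : bool := valid_from p.1 p.2.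
Definition ptgt (Q : quiver) (p : qpath Q) : qV Q := end_from p.1 p.2.

(* Elements of the path algebra kQ: k-valued coefficient functions on paths,
   finitely supported on genuine paths. *)
Definition kQ (k : fieldType) (Q : quiver) := qpath Q -> k.

Section PathAlgebra.
Variables (k : fieldType) (Q : quiver).

Definition kQ_elem (f : kQ k Q) : Prop :=
  (exists s : seq (qpath Q), forall p, f p != 0 -> p \in s) /\
  (forall p, f p != 0 -> pvalid p).

Definition kQ_zero : kQ k Q := fun _ => 0.
Definition kQ_add (f g : kQ k Q) : kQ k Q := fun p => f p + g p.
Definition kQ_scale (c : k) (f : kQ k Q) : kQ k Q := fun p => c * f p.
(* product = concatenation of paths, extended bilinearly *)
Definition kQ_mul (f g : kQ k Q) : kQ k Q := fun p =>
  \sum_(i < (size p.2).+1)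
     f (p.1, take i p.2) * g (end_from p.1 (take i p.2), drop i p.2).

Record is_ideal (I : kQ k Q -> Prop) : Prop := {
  ideal_elem : forall f, I f -> kQ_elem f;
  ideal_ext : forall f g, I f -> f =1 g -> I g;
  ideal0 : I kQ_zero;
  idealD : forall f g, I f -> I g -> I (kQ_add f g);
  idealZ : forall c f, I f -> I (kQ_scale c f);
  idealMl : forall f g, I f -> kQ_elem g -> I (kQ_mul g f);
  idealMr : forall f g, I f -> kQ_elem g -> I (kQ_mul f g)
}.

(* F^m, the m-th power of the arrow ideal: elements supported on paths of
   length >= m *)
Definition arrowF (m : nat) (f : kQ k Q) : Prop :=
  kQ_elem f /\ forall p, f p != 0 -> (m <= size p.2)%N.

Definition admissible (I : kQ k Q -> Prop) : Prop :=
  is_ideal I /\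
  exists m : nat, (2 <= m)%N /\ (forall f, arrowF m f -> I f)
                            /\ (forall f, I f -> arrowF 2 f).

Definition lincomb (ws : seq (k * qpath Q)) : kQ k Q :=
  fun p => \sum_(c <- ws) c.1 * (c.2 == p)%:R.

Definition min_rel (I : kQ k Q -> Prop) (ws : seq (k * qpath Q)) : Prop :=
  [/\ (2 <= size ws)%N,
      all (fun c => c.1 != 0) ws,
      uniq (map snd ws),
      (exists x y : qV Q,
          all (fun c => [&& pvalid c.2, c.2.1 == x & ptgt c.2 == y]) ws)
    & I (lincomb ws) /\
      (forall ws', subseq ws' ws -> (0 < size ws' < size ws)%N ->
                   ~ I (lincomb ws'))].

(* letter (a, true) = arrow a ; (a, false) = formal inverse a^-1 *)
Definition qwalk := (qV Q * seq (qA Q * bool))%type.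

Definition lsrc (l : qA Q * bool) : qV Q := if l.2 then qs l.1 else qt l.1.
Definition ltgt (l : qA Q * bool) : qV Q := if l.2 then qt l.1 else qs l.1.

Fixpoint wvalid_from (v : qV Q) (s : seq (qA Q * bool)) : bool :=
  if s is l :: s' then (lsrc l == v) && wvalid_from (ltgt l) s' else true.
Fixpoint wend_from (v : qV Q) (s : seq (qA Q * bool)) : qV Q :=
  if s is l :: s' then wend_from (ltgt l) s' else v.

Definition wvalid (w : qwalk) : bool := wvalid_from w.1 w.2.
Definition wend (w : qwalk) : qV Q := wend_from w.1 w.2.

Definition path_walk (p : qpath Q) : qwalk := (p.1, map (fun a => (a, true)) p.2).

Inductive htp (I : kQ k Q -> Prop) : qwalk -> qwalk -> Prop :=
| htp_refl w : wvalid w -> htp I w w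
| htp_sym u v : htp I u v -> htp I v u
| htp_trans u v w : htp I u v -> htp I v w -> htp I u w
| htp_cancel1 a : htp I (qs a, [:: (a, true); (a, false)]) (qs a, [::])
| htp_cancel2 a : htp I (qt a, [:: (a, false); (a, true)]) (qt a, [::])
| htp_rel ws p q : min_rel I ws -> p \in map snd ws -> q \in map snd ws ->
    htp I (path_walk p) (path_walk q)
| htp_cong v w u u' w' : htp I u u' -> wvalid (v, w) -> wend (v, w) = u.1 ->
    wvalid (wend u, w') ->
    htp I (v, w ++ u.2 ++ w') (v, w ++ u'.2 ++ w').

End PathAlgebra.

Section QH.
Variable n : nat.

(* vertices: inl j = x_{j+1} (j < n+1), inr j = y_{j+1} (j < n)
   arrows:  inl (inl j) = r_{j+1}, inl (inr j) = l_{j+1}, inr j = a_{j+1} *)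
Definition QH_src (e : ('I_n + 'I_n) + 'I_n) : ('I_n.+1 + 'I_n) :=
  match e with
  | inl (inl j) => inl (widen_ord (leqnSn n) j)
  | inl (inr j) => inr j
  | inr j => inl (widen_ord (leqnSn n) j)
  end.
Definition QH_tgt (e : ('I_n + 'I_n) + 'I_n) : ('I_n.+1 + 'I_n) :=
  match e with
  | inl (inl j) => inr j
  | inl (inr j) => inl (lift ord0 j)
  | inr j => inl (lift ord0 j)
  end.

Definition QH : quiver := @Quiver ('I_n.+1 + 'I_n)%type (('I_n + 'I_n) + 'I_n)%type
  QH_src QH_tgt.

Definition QH_r (j : 'I_n) : qA QH := inl (inl j).
Definition QH_l (j : 'I_n) : qA QH := inl (inr j).
Definition QH_a (j : 'I_n) : qA QH := inr j.

(* x_i for 1-based i *)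
Definition QH_x (i : nat) : qV QH := inl (inord i.-1).
Definition QH_x1 : qV QH := inl ord0.

(* m_{0,j+1} = a_1 ... a_j, as a walk word *)
Definition QH_m0 (j : 'I_n) : seq (qA QH * bool) :=
  [seq (QH_a t, true) | t <- [seq t0 : 'I_n <- enum 'I_n | (t0 < j)%N]].

Definition winv (s : seq (qA QH * bool)) : seq (qA QH * bool) :=
  rev (map (fun l => (l.1, ~~ l.2)) s).

(* alpha_{j+1} = m_{0,j+1} r_{j+1} l_{j+1} a_{j+1}^-1 m_{0,j+1}^-1 *)
Definition QH_alpha (j : 'I_n) : seq (qA QH * bool) :=
  QH_m0 j ++ [:: (QH_r j, true); (QH_l j, true); (QH_a j, false)] ++ winv (QH_m0 j).

Definition QH_range (i k' : nat) : seq 'I_n :=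
  [seq j : 'I_n <- enum 'I_n | (i <= j.+1 <= i + k')%N].

Definition QH_rel (k : fieldType) (i k' : nat) : seq (k * qpath QH) :=
  [:: (1, (QH_x i, [seq QH_a j | j <- QH_range i k']));
      (1, (QH_x i, flatten [seq [:: QH_r j; QH_l j] | j <- QH_range i k']))].

End QH.

(** In [pi_1(Q_H, I, x_1)] each [alpha_j] equals [m_{0j} A_j m_{0,j+1}^{-1}], because
    [m_{0,j+1} = m_{0j} a_j].  Hence the product [alpha_i ... alpha_{i+k'}] telescopes to
    [m_{0i} A_i ... A_{i+k'} m_{0,i+k'+1}^{-1}].  The minimal relation identifies
    [A_i ... A_{i+k'}] with [a_i ... a_{i+k'}], and [m_{0i} a_i ... a_{i+k'} = m_{0,i+k'+1}],
    so the product is homotopic to [m_{0,i+k'+1} m_{0,i+k'+1}^{-1}], which is trivial. *)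

From HB Require Import structures.
From mathcomp Require Import all_boot all_order all_algebra.
From mathcomp Require Import zify.
Set Implicit Arguments. Unset Strict Implicit.

Lemma filter_iota_interval m len lo hi :
  [seq x <- iota m len | lo <= x < hi] =
  iota (maxn m lo) (minn (m + len) hi - maxn m lo).
Proof.
elim: len m => [|len IH] m; first by have -> : minn (m + 0) hi - maxn m lo = 0 by lia.
rewrite /= IH; case: ifP => [/andP [lo_m m_hi] | /negbT /nandP [|]].
- have -> : maxn m lo = m by lia.
  have -> : maxn m.+1 lo = m.+1 by lia.
  by have -> : minn (m + len.+1) hi - m = (minn (m.+1 + len) hi - m.+1).+1 by lia.
- rewrite -ltnNge => m_lo.
  have -> : maxn m.+1 lo = lo by lia.
  have -> : maxn m lo = lo by lia.
  by rewrite addSnnS.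
- rewrite -leqNgt => hi_m.
  have -> : minn (m.+1 + len) hi - maxn m.+1 lo = 0 by lia.
  by have -> : minn (m + len.+1) hi - maxn m lo = 0 by lia.
Qed.

Section Walks.
Variables (k : fieldType) (Q : quiver) (I : kQ k Q -> Prop).

Definition walk_between (v : qV Q) (s : seq (qA Q * bool)) (u : qV Q) :=
  wvalid_from v s /\ wend_from v s = u.

Lemma walk_between_cons v l s u :
  lsrc l = v -> walk_between (ltgt l) s u -> walk_between v (l :: s) u.
Proof. by move=> <- [s_valid s_end]; split => //=; rewrite eqxx. Qed.

Lemma walk_between_cat v s1 u s2 w :
  walk_between v s1 u -> walk_between u s2 w -> walk_between v (s1 ++ s2) w.
Proof.
elim: s1 v => [|l s IH] v [s_valid s_end] s2_walk; first by move: s_end => /= ->.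
case/andP: s_valid => /eqP l_src s_valid.
by apply: walk_between_cons => //; exact: IH.
Qed.

Lemma walk_between_flatten v ss :
  (forall s, s \in ss -> walk_between v s v) -> walk_between v (flatten ss) v.
Proof.
elim: ss => [|s ss IH] ss_loops //=.
apply: (walk_between_cat (ss_loops s (mem_head _ _))).
by apply: IH => t t_in; apply: ss_loops; rewrite inE t_in orbT.
Qed.

Definition letter_inv (l : qA Q * bool) := (l.1, ~~ l.2).

Definition walk_inv (s : seq (qA Q * bool)) := rev (map letter_inv s).

Lemma lsrc_inv l : lsrc (letter_inv l) = ltgt l. Proof. by case: l => a []. Qed.
Lemma ltgt_inv l : ltgt (letter_inv l) = lsrc l. Proof. by case: l => a []. Qed.

Lemma walk_inv_cons l s : walk_inv (l :: s) = walk_inv s ++ [:: letter_inv l].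
Proof. by rewrite /walk_inv /= rev_cons cats1. Qed.

Lemma walk_inv_cat s t : walk_inv (s ++ t) = walk_inv t ++ walk_inv s.
Proof. by rewrite /walk_inv map_cat rev_cat. Qed.

Lemma walk_invK : involutive walk_inv.
Proof.
move=> s; rewrite /walk_inv map_rev revK -map_comp -[RHS]map_id.
by apply: eq_map => -[a b]; rewrite /letter_inv /= negbK.
Qed.

Lemma walk_between_inv v s u : walk_between v s u -> walk_between u (walk_inv s) v.
Proof.
elim: s v => [|l s IH] v [/= s_valid s_end]; first by rewrite s_end.
case/andP: s_valid => /eqP l_src s_valid; rewrite walk_inv_cons.
apply: (walk_between_cat (IH _ (conj s_valid s_end))).
by apply: walk_between_cons; rewrite ?lsrc_inv ?ltgt_inv.
Qed.

Lemma htp_context v w u s s' u' w' :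
  walk_between v w u -> walk_between u s u' -> wvalid_from u' w' ->
  htp I (u, s) (u, s') -> htp I (v, w ++ s ++ w') (v, w ++ s' ++ w').
Proof.
move=> [w_valid w_end] [_ s_end] w'_valid s_s'.
by apply: htp_cong s_s' w_valid w_end _; rewrite /wend /= s_end.
Qed.

Lemma htp_letter_inv l : htp I (lsrc l, [:: l; letter_inv l]) (lsrc l, [::]).
Proof. by case: l => a []; [apply: htp_cancel1 | apply: htp_cancel2]. Qed.

Lemma htp_cancel_inv v w u s w' :
  walk_between v w u -> wvalid_from u s -> wvalid_from u w' ->
  htp I (v, w ++ s ++ walk_inv s ++ w') (v, w ++ w').
Proof.
elim: s w u w' => [|l s IH] w u w' w_walk s_valid w'_valid.
  by apply: htp_refl; case: (walk_between_cat w_walk (conj w'_valid erefl)).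
case/andP: s_valid => /eqP l_src s_valid.
have l_walk : walk_between u [:: l] (ltgt l) by apply: walk_between_cons.
apply: (htp_trans (v := (v, w ++ [:: l; letter_inv l] ++ w'))).
  have := IH (w ++ [:: l]) (ltgt l) (letter_inv l :: w').
  rewrite walk_inv_cons -!catA; apply => //; first exact: walk_between_cat l_walk.
  by rewrite /= lsrc_inv eqxx ltgt_inv l_src.
change (htp I (v, w ++ [:: l; letter_inv l] ++ w') (v, w ++ [::] ++ w')).
apply: (htp_context (u' := u) w_walk _ w'_valid).
  by apply: (walk_between_cat l_walk); apply: walk_between_cons; rewrite ?lsrc_inv ?ltgt_inv.
by rewrite -l_src; apply: htp_letter_inv.
Qed.

Lemma htp_inv_cancel v w u u' s w' :
  walk_between v w u -> walk_between u' s u -> wvalid_from u w' ->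
  htp I (v, w ++ walk_inv s ++ s ++ w') (v, w ++ w').
Proof.
move=> w_walk s_walk w'_valid; rewrite -{2}(walk_invK s).
by apply: htp_cancel_inv w_walk _ w'_valid; case: (walk_between_inv s_walk).
Qed.

End Walks.

Section QHWalks.
Variable n : nat.
Local Notation N := n.+1.

Lemma filter_enum_ord_interval (P : pred 'I_N) lo hi : hi <= N ->
  (forall t : 'I_N, P t = (lo <= t < hi)) ->
  [seq t <- enum 'I_N | P t] = map inord (iota lo (hi - lo)).
Proof.
move=> hi_N P_E; apply: (inj_map val_inj).
rewrite (eq_filter (a2 := preim val (fun x => lo <= x < hi))) //.
rewrite -filter_map val_enum_ord filter_iota_interval -map_comp.
have -> : maxn 0 lo = lo by lia.
have -> : minn (0 + N) hi = hi by lia.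
by rewrite map_id_in // => x; rewrite mem_iota => x_in /=; rewrite inordK //; lia.
Qed.

(* Indices are 0-based: [xv j], [av j], [rv j], [lv j] are [x_{j+1}], [a_{j+1}], [r_{j+1}],
   [l_{j+1}]; [aword m len] is [a_{m+1} ... a_{m+len}] and [rlword m len] is
   [A_{m+1} ... A_{m+len}], so [m_{0,j+1}] is [aword 0 j]. *)
Definition xv (j : nat) : qV (QH N) := inl (inord j).
Definition av (j : nat) : qA (QH N) := QH_a (inord j : 'I_N).
Definition rv (j : nat) : qA (QH N) := QH_r (inord j : 'I_N).
Definition lv (j : nat) : qA (QH N) := QH_l (inord j : 'I_N).

Lemma qs_av j : j < N -> qs (av j) = xv j.
Proof. by move=> j_lt; congr inl; apply: val_inj; rewrite /= !inordK //; lia. Qed.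

Lemma qt_av j : j < N -> qt (av j) = xv j.+1.
Proof. by move=> j_lt; congr inl; apply: val_inj; rewrite /= /bump !inordK //; lia. Qed.

Lemma qs_rv j : j < N -> qs (rv j) = xv j.
Proof. by move=> j_lt; congr inl; apply: val_inj; rewrite /= !inordK //; lia. Qed.

Lemma qt_lv j : j < N -> qt (lv j) = xv j.+1.
Proof. by move=> j_lt; congr inl; apply: val_inj; rewrite /= /bump !inordK //; lia. Qed.

Definition aword m len := [seq (av t, true) | t <- iota m len].
Definition rlword m len :=
  flatten [seq [:: (rv t, true); (lv t, true)] | t <- iota m len].

Lemma awordD m len1 len2 : aword m (len1 + len2) = aword m len1 ++ aword (m + len1) len2.
Proof. by rewrite /aword iotaD map_cat. Qed.

Lemma rlwordD m len1 len2 :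
  rlword m (len1 + len2) = rlword m len1 ++ rlword (m + len1) len2.
Proof. by rewrite /rlword iotaD map_cat flatten_cat. Qed.

Lemma awordS m len : aword m len.+1 = aword m len ++ [:: (av (m + len), true)].
Proof. by rewrite -[len.+1]addn1 awordD. Qed.

Lemma walk_between_aword m len :
  m + len <= N -> walk_between (xv m) (aword m len) (xv (m + len)).
Proof.
elim: len m => [|len IH] m le_N; first by rewrite addn0.
apply: walk_between_cons; first by apply: qs_av; lia.
have -> : ltgt (av m, true) = xv m.+1 by apply: qt_av; lia.
by rewrite -addSnnS; apply: IH; lia.
Qed.

Lemma walk_between_rlword m len :
  m + len <= N -> walk_between (xv m) (rlword m len) (xv (m + len)).
Proof.
elim: len m => [|len IH] m le_N; first by rewrite addn0.
apply: walk_between_cons; first by apply: qs_rv; lia.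
apply: walk_between_cons => //.
have -> : ltgt (lv m, true) = xv m.+1 by apply: qt_lv; lia.
by rewrite -addSnnS; apply: IH; lia.
Qed.

Lemma walk_between_m0 j : j <= N -> walk_between (xv 0) (aword 0 j) (xv j).
Proof. by have := @walk_between_aword 0 j; rewrite add0n. Qed.

(* The [winv] occurring in [QH_alpha] is [walk_inv] on [QH N] up to conversion. *)
Lemma QH_alphaE j : j < N ->
  QH_alpha (inord j : 'I_N) = aword 0 j ++ rlword j 1 ++ walk_inv (aword 0 j.+1).
Proof.
move=> j_lt; rewrite /QH_alpha awordS walk_inv_cat.
rewrite /QH_m0 (filter_enum_ord_interval (lo := 0) (hi := j)) ?subn0 -?map_comp //.
- by rewrite ltnW.
- by move=> t; rewrite inordK.
Qed.

Lemma walk_between_alpha_tail j : j < N ->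
  walk_between (xv j) (rlword j 1 ++ walk_inv (aword 0 j.+1)) (xv 0).
Proof.
move=> j_lt; apply: (walk_between_cat (walk_between_rlword _)); first by rewrite addn1.
by rewrite addn1; apply: walk_between_inv; apply: walk_between_aword.
Qed.

Lemma walk_between_alpha j : j < N ->
  walk_between (xv 0) (QH_alpha (inord j : 'I_N)) (xv 0).
Proof.
move=> j_lt; rewrite QH_alphaE //.
exact: walk_between_cat (walk_between_m0 (ltnW j_lt)) (walk_between_alpha_tail j_lt).
Qed.

Lemma QH_x1E : QH_x1 N = xv 0.
Proof. by congr inl; apply: val_inj; rewrite /= inordK. Qed.

Lemma QH_rangeE J k' : J + k' < N -> QH_range N J.+1 k' = map inord (iota J k'.+1).
Proof.
move=> lt_N; rewrite /QH_range (filter_enum_ord_interval (lo := J) (hi := J.+1 + k')).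
- by congr (map _ (iota _ _)); lia.
- lia.
- by move=> t; rewrite ltnS.
Qed.

End QHWalks.

Section QHHomotopy.
Variables (k : fieldType) (n : nat) (I : kQ k (QH n.+1) -> Prop).
Local Notation N := n.+1.
Local Notation alpha_prod J K :=
  (flatten [seq QH_alpha (inord j : 'I_N) | j <- iota J K.+1]).

Lemma walk_between_alpha_prod J K :
  J + K < N -> walk_between (xv n 0) (alpha_prod J K) (xv n 0).
Proof.
move=> lt_N; apply: walk_between_flatten => w /mapP [j]; rewrite mem_iota => j_in ->.
by apply: walk_between_alpha; lia.
Qed.

Lemma htp_alpha_prod J K : J + K < N ->
  htp I (xv n 0, alpha_prod J K)
        (xv n 0, aword n 0 J ++ rlword n J K.+1 ++ walk_inv (aword n 0 (J + K).+1)).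
Proof.
elim: K => [|K IH] lt_N.
  rewrite addn0 /= cats0 -QH_alphaE; last lia.
  by apply: htp_refl; case: (walk_between_alpha (n := n) (j := J) _); first lia.
have {IH} IH : htp I (xv n 0, alpha_prod J K)
    (xv n 0, aword n 0 J ++ rlword n J K.+1 ++ walk_inv (aword n 0 (J + K).+1)).
  by apply: IH; lia.
have -> : alpha_prod J K.+1 = alpha_prod J K ++ QH_alpha (inord (J + K.+1) : 'I_N).
  by rewrite -[K.+2]addn1 iotaD map_cat flatten_cat /= cats0.
rewrite -[K.+2]addn1 rlwordD !addnS QH_alphaE; last by rewrite -addnS.
rewrite addnS in lt_N.
set L := J + K in lt_N IH *.
have s_walk : walk_between (xv n 0) (aword n 0 L.+1) (xv n L.+1).
  exact: walk_between_m0 (ltnW lt_N).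
have w_walk : walk_between (xv n 0) (aword n 0 J ++ rlword n J K.+1) (xv n L.+1).
  apply: (walk_between_cat (walk_between_m0 (j := J) _)); first lia.
  by rewrite /L -addnS; apply: walk_between_rlword; lia.
have [tail_valid _] := walk_between_alpha_tail lt_N.
apply: htp_trans (htp_context (w := [::]) _ (walk_between_alpha_prod _) _ IH) _ => //.
- lia.
- by case: (walk_between_cat s_walk (walk_between_alpha_tail lt_N)).
have := htp_inv_cancel I w_walk s_walk tail_valid; rewrite -!catA; apply.
Qed.

Lemma htp_QH_rel J k' : J + k' < N -> min_rel I (QH_rel N k J.+1 k') ->
  htp I (xv n J, rlword n J k'.+1) (xv n J, aword n J k'.+1).
Proof.
move=> lt_N rel; have := htp_rel (p := (QH_x N J.+1, flatten
    [seq [:: QH_r j; QH_l j] | j <- QH_range N J.+1 k']))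
  (q := (QH_x N J.+1, [seq QH_a j | j <- QH_range N J.+1 k'])) rel.
rewrite /path_walk /= QH_rangeE // map_flatten -!map_comp.
by apply; rewrite !inE eqxx ?orbT.
Qed.

End QHHomotopy.

Theorem mainTheorem5 (k : fieldType) (n : nat) (hn : (1 <= n)%N)
  (i k' : nat) (hi : (1 <= i)%N) (hik : (i + k' <= n)%N)
  (I : kQ k (QH n) -> Prop) (hI : admissible I)
  (hrel : min_rel I (QH_rel n k i k')) :
  htp I (QH_x1 n, flatten [seq QH_alpha j | j <- QH_range n i k'])
        (QH_x1 n, [::]).
Proof.
case: n hn hik I hI hrel => [//|n] _; case: i hi => [//|J] _ hik I _ hrel.
have lt_N : J + k' < n.+1 by lia.
rewrite QH_rangeE // QH_x1E -map_comp.
apply: htp_trans (htp_alpha_prod I lt_N) _.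
have m0_walk : walk_between (xv n 0) (aword n 0 J) (xv n J).
  by apply: walk_between_m0; lia.
have rl_walk : walk_between (xv n J) (rlword n J k'.+1) (xv n (J + k').+1).
  by rewrite -addnS; apply: walk_between_rlword; lia.
have [inv_valid _] := walk_between_inv (walk_between_m0 lt_N).
apply: htp_trans (htp_context m0_walk rl_walk inv_valid (htp_QH_rel lt_N hrel)) _.
rewrite catA -awordD addnS.
have [m0_valid _] := walk_between_m0 lt_N.
have := htp_cancel_inv I (w := [::]) (w' := [::]) (conj erefl erefl) m0_valid erefl.
by rewrite cats0.
Qed.
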